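(* Let $\mathfrak g$ be of type $A_n$. For distinct $i,j\in I$ and every $b\in\mathcal B(\infty)$, $\widetilde f_i\widetilde f_j^\ast(b)=\widetilde f_j^\ast\widetilde f_i(b)$.
   Context: $I=\{1,\dots,n\}$. $\mathcal I=\{(s,t)\in\mathbb Z_{>0}\times I:s+t\le n+1\}$; $\mathcal B(\infty)$ is the set of $b=(b_{s,t})_{(s,t)\in\mathcal I}\in\mathbb Z_{\ge0}^{\mathcal I}$ with $b_{1,k}\ge b_{2,k-1}\ge\dots\ge b_{k,1}$ for $1\le k\le n$. Convention: $b_{s,t}=0$, $\mathbf e_{s,t}=0$ for $(s,t)\notin\mathcal I$. $\partial_{s,t}(b)=b_{s,t}-b_{s,t+1}-b_{s+1,t-1}+b_{s+1,t}$, $\partial^\ast_{s,t}(b)=b_{s-1,t}-b_{s-1,t+1}-b_{s,t-1}+b_{s,t}$. For $i\in I$, $1\le k\le n+1-i$: $\Sigma_k(b)=\sum_{s=k}^{n+1-i}\partial_{s,i}(b)$, $m_i(b)$ the smallest $k$ maximizing $\Sigma_k(b)$, $\widetilde f_i(b)=b+\mathbf e_{m_i(b),i}$. For $j\in I$, $1\le k\le j$: $\Sigma^\ast_k(b)=\sum_{t=1}^k\partial^\ast_{t,j+1-t}(b)$, $m_j^\ast(b)$ the smallest $k$ maximizing $\Sigma^\ast_k(b)$, $\widetilde f_j^\ast(b)=b+\sum_{t=1}^{m_j^\ast(b)}(\mathbf e_{t,j+1-t}-\mathbf e_{t-1,j+1-t})$. *)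

From mathcomp Require Import all_boot all_order all_algebra.
Set Implicit Arguments. Unset Strict Implicit. Unset Printing Implicit Defensive.
Import Order.TTheory GRing.Theory Num.Theory.
Local Open Scope ring_scope.

(* An element b = (b_{s,t}) is represented as a function nat -> nat -> int,
   with the convention b_{s,t} = 0 for (s,t) outside the index set. *)
Definition arr := nat -> nat -> int.

Definition inI (n s t : nat) : bool := [&& (0 < s)%N, (0 < t)%N & (s + t <= n.+1)%N].

Definition inBinf (n : nat) (b : arr) : Prop :=
  (forall s t, ~~ inI n s t -> b s t = 0) /\
  (forall s t, inI n s t -> 0 <= b s t) /\
  (forall k s, (1 <= k <= n)%N -> (1 <= s < k)%N ->
      b (s.+1) (k - s)%N <= b s (k.+1 - s)%N).

Definition evec (n s t : nat) : arr :=
  fun s' t' => if (s' == s) && (t' == t) && inI n s t then 1 else 0.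

Definition addarr (b c : arr) : arr := fun s t => b s t + c s t.
Definition subarr (b c : arr) : arr := fun s t => b s t - c s t.

Definition partial (b : arr) (s t : nat) : int :=
  b s t - b s t.+1 - b s.+1 t.-1 + b s.+1 t.

Definition partial_star (b : arr) (s t : nat) : int :=
  b s.-1 t - b s.-1 t.+1 - b s t.-1 + b s t.

Definition first_argmax (F : nat -> int) (lo hi : nat) : nat :=
  let s := iota lo (hi.+1 - lo) in
  let M := \big[Num.max/F lo]_(k <- s) F k in
  (lo + find (fun k => F k == M) s)%N.

Definition Sigma (n i : nat) (b : arr) (k : nat) : int :=
  \sum_(k <= s < (n.+1 - i).+1) partial b s i.

Definition m_i (n i : nat) (b : arr) : nat :=
  first_argmax (Sigma n i b) 1 (n.+1 - i).

Definition f_tilde (n i : nat) (b : arr) : arr :=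
  addarr b (evec n (m_i n i b) i).

Definition Sigma_star (j : nat) (b : arr) (k : nat) : int :=
  \sum_(1 <= t < k.+1) partial_star b t (j.+1 - t).

Definition m_star (j : nat) (b : arr) : nat :=
  first_argmax (Sigma_star j b) 1 j.

Definition f_tilde_star (n j : nat) (b : arr) : arr :=
  fun s' t' => b s' t' + \sum_(1 <= t < (m_star j b).+1)
      (evec n t (j.+1 - t) s' t' - evec n t.-1 (j.+1 - t) s' t').

(* [f_tilde n i] adds e_{m,i} with m = m_i(b), and [f_tilde_star n j] adds
   [fstar_incr n j M] with M = m*_j(b): +1 on the first M cells of the
   antidiagonal s + t = j + 1 and -1 on the first M - 1 cells of s + t = j.
   Each move changes the partial sums that select the other move only at the
   row k = m (resp. k = M), and only if (k, i) lies on one of these two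
   antidiagonals, i.e. k = c + 1 or k = c where c = j - i ([cross_effect]).
   Because Sigma_c - Sigma_{c+1} = partial_{c,i} = Sigma*_{c+1} - Sigma*_c, such
   a unit perturbation leaves the first argmax in place unless m_i = m*_j = c,
   and then moves both to c + 1 ([first_argmax_exchange]). In that case both
   composites add [fstar_incr n j c] + e_{c+1,i}. *)

From mathcomp Require Import all_boot all_order all_algebra zify.
From Stdlib Require Import FunctionalExtensionality.

Set Implicit Arguments.
Unset Strict Implicit.
Unset Printing Implicit Defensive.
Import Order.TTheory GRing.Theory Num.Theory.
Local Open Scope ring_scope.

(* A notation rather than a definition, so that [lia] sees the indicator. *)
Notation ind c := (Posz (nat_of_bool c)).

Definition is_first_argmax (F : nat -> int) (lo hi k : nat) : Prop :=
  [/\ (lo <= k <= hi)%N, forall x, (lo <= x <= hi)%N -> F x <= F k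
    & forall x, (lo <= x < k)%N -> F x < F k].

Lemma first_argmaxP F lo hi :
  (lo <= hi)%N -> is_first_argmax F lo hi (first_argmax F lo hi).
Proof.
move=> le_lo_hi; rewrite /first_argmax.
set s := iota lo _; set M := \big[Num.max/F lo]_(k <- s) F k.
have mem_s x : (x \in s) = (lo <= x <= hi)%N by rewrite mem_iota; lia.
have le_M x : (lo <= x <= hi)%N -> F x <= M.
  by move=> hx; apply: le_bigmax_seq; rewrite ?mem_s.
have attained : has (fun k => F k == M) s.
  rewrite /M big_seq.
  apply: (big_ind (fun v => has (fun k => F k == v) s)) => [|u v hu hv|x xs].
  - by apply/hasP; exists lo; rewrite ?mem_s ?leqnn.
  - by case: leP.
  - by apply/hasP; exists x.
have find_lt : (find (fun k => F k == M) s < hi.+1 - lo)%N.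
  by move: attained; rewrite has_find size_iota.
have := nth_find lo attained; rewrite nth_iota // => /eqP F_max.
split; first lia.
- by move=> x hx; rewrite F_max le_M.
- move=> x hx; rewrite F_max lt_neqAle le_M ?andbT; last lia.
  have := before_find lo (_ : (x - lo < find (fun k => F k == M) s)%N).
  by rewrite nth_iota ?subnKC => [->| |]; lia.
Qed.

Lemma first_argmax_eq F lo hi k :
  is_first_argmax F lo hi k -> first_argmax F lo hi = k.
Proof.
move=> [k_rng k_max k_first].
have [|a_rng a_max a_first] := first_argmaxP F (_ : lo <= hi)%N; first lia.
case: (ltngtP (first_argmax F lo hi) k) => // [lt_a_k|lt_k_a].
- by have := k_first _ (_ : lo <= first_argmax F lo hi < k)%N; have := a_max k; lia.
- by have := a_first k; have := k_max (first_argmax F lo hi); lia.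
Qed.

Lemma eq_first_argmax F G lo hi :
  (forall x, (lo <= x <= hi)%N -> F x = G x) ->
  first_argmax F lo hi = first_argmax G lo hi.
Proof.
move=> eqFG; have [le_lo_hi|lt_hi_lo] := leqP lo hi; last first.
  by rewrite /first_argmax (_ : hi.+1 - lo = 0)%N //; lia.
apply: first_argmax_eq; have [k_rng k_max k_first] := first_argmaxP G le_lo_hi.
split=> // x hx; rewrite !eqFG //; [exact: k_max | exact: k_first | lia].
Qed.

Section UnitPerturbation.
Variables (F G : nat -> int) (lo hi c : nat).
Hypothesis le_lo_hi : (lo <= hi)%N.

Lemma first_argmax_incr :
  (forall x, (lo <= x <= hi)%N -> G x = F x + ind (x == c)) ->
  first_argmax G lo hi = c \/ first_argmax G lo hi = first_argmax F lo hi.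
Proof.
move=> G_def; have [k_rng k_max k_first] := first_argmaxP G le_lo_hi.
have [->|k_neq_c] := eqVneq (first_argmax G lo hi) c; [by left | right].
symmetry; apply: first_argmax_eq; split=> // x hx.
- by have := k_max x hx; rewrite !G_def //; lia.
- by have := k_first x hx; rewrite !G_def //; lia.
Qed.

Hypothesis G_def : forall x, (lo <= x <= hi)%N -> G x = F x - ind (x == c).

Lemma first_argmax_decr_other :
  first_argmax F lo hi != c -> first_argmax G lo hi = first_argmax F lo hi.
Proof.
move=> k_neq_c; have [k_rng k_max k_first] := first_argmaxP F le_lo_hi.
apply: first_argmax_eq; split=> // x hx.
- by have := k_max x hx; rewrite !G_def //; lia.
- by have := k_first x hx; rewrite !G_def //; lia.
Qed.

Lemma first_argmax_decr_self :
  first_argmax F lo hi = c -> (c < hi)%N -> F c <= F c.+1 ->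
  first_argmax G lo hi = c.+1.
Proof.
move=> k_eq_c lt_c_hi le_Fc; have := first_argmaxP F le_lo_hi.
rewrite k_eq_c => -[c_rng c_max c_first].
have Gc1 : G c.+1 = F c.+1 by rewrite G_def; lia.
apply: first_argmax_eq; split; first lia.
- by move=> x hx; have := c_max x hx; rewrite Gc1 G_def //; lia.
- move=> x /andP[lo_x]; rewrite Gc1 ltnS leq_eqVlt => /orP[/eqP->|lt_x_c].
  + by rewrite G_def ?eqxx; lia.
  + by have := c_first x; rewrite G_def; lia.
Qed.

End UnitPerturbation.

Lemma first_argmax_exchange F G H lo hiF hiH c :
  (lo <= c)%N -> (c < hiF)%N -> (c < hiH)%N ->
  F c.+1 + H c.+1 = F c + H c ->
  (forall x, (lo <= x <= hiF)%N -> G x = F x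
     + ind ((x == first_argmax H lo hiH) && (x == c.+1))
     - ind ((x == first_argmax H lo hiH) && (x == c))) ->
  first_argmax G lo hiF =
    if (first_argmax H lo hiH == c) && (first_argmax F lo hiF == c)
    then c.+1 else first_argmax F lo hiF.
Proof.
move=> lo_c c_hiF c_hiH FH_step.
have le_lo_hiF : (lo <= hiF)%N by lia.
have [|_ M_max M_first] := first_argmaxP H (_ : lo <= hiH)%N; first lia.
have M_c1 : first_argmax H lo hiH = c.+1 -> F c.+1 < F c.
  by move=> M_eq; have := M_first c; rewrite M_eq; lia.
have M_c : first_argmax H lo hiH = c -> F c <= F c.+1.
  by move=> M_eq; have := M_max c.+1; rewrite M_eq; lia.
have [M_eq|M_neq_c1] := eqVneq (first_argmax H lo hiH) c.+1.
  rewrite M_eq => G_def; rewrite (_ : c.+1 == c = false) ?andFb; last lia.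
  have G_incr x : (lo <= x <= hiF)%N -> G x = F x + ind (x == c.+1).
    by move=> hx; rewrite G_def //; lia.
  have [G_c1|//] := first_argmax_incr le_lo_hiF G_incr.
  have [_ _] := first_argmaxP G le_lo_hiF; rewrite G_c1 => G_first.
  by have := G_first c; have := M_c1 M_eq; rewrite !G_incr; lia.
have [M_eq|M_neq_c] := eqVneq (first_argmax H lo hiH) c.
  rewrite /= => G_def.
  have G_decr x : (lo <= x <= hiF)%N -> G x = F x - ind (x == c).
    by move=> hx; rewrite G_def //; lia.
  have [A_c|A_neq_c] := eqVneq (first_argmax F lo hiF) c.
  - exact: first_argmax_decr_self le_lo_hiF G_decr A_c c_hiF (M_c M_eq).
  - exact: first_argmax_decr_other le_lo_hiF G_decr A_neq_c.
rewrite /= => G_def.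
by apply: eq_first_argmax => x hx; rewrite G_def //; lia.
Qed.

Lemma evecE n s t s' t' :
  evec n s t s' t' = ind [&& s' == s, t' == t & inI n s t].
Proof. by rewrite /evec andbA; case: ifP. Qed.

Lemma arr_ext (b c : arr) : (forall s t, b s t = c s t) -> b = c.
Proof. by move=> eq_bc; do 2 apply: functional_extensionality => ?. Qed.

Lemma Sigma_addarr n i b c k :
  Sigma n i (addarr b c) k = Sigma n i b k + Sigma n i c k.
Proof.
rewrite /Sigma -big_split /=.
by apply: eq_bigr => s _; rewrite /partial /addarr; lia.
Qed.

Lemma Sigma_star_addarr j b c k :
  Sigma_star j (addarr b c) k = Sigma_star j b k + Sigma_star j c k.
Proof.
rewrite /Sigma_star -big_split /=.
by apply: eq_bigr => t _; rewrite /partial_star /addarr; lia.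
Qed.

Lemma Sigma_star_telescope j b k : (k <= j)%N ->
  Sigma_star j b k = (b k (j.+1 - k)%N - b k (j - k)%N) - (b 0%N j.+1 - b 0%N j).
Proof.
move=> le_k_j; rewrite /Sigma_star.
pose g t := b t (j.+1 - t)%N - b t (j - t)%N.
rewrite (telescope_sumr_eq (fun t => g t.-1)) //= /g ?subn0 //.
case=> // t /andP[_ lt_t_k]; have le_t_j : (t <= j)%N by lia.
by rewrite /partial_star /= -(subSn le_t_j) -subnS !subSS; lia.
Qed.

Lemma Sigma_Sigma_star_step n i j b : (i < j <= n)%N ->
  Sigma n i b (j - i).+1 + Sigma_star j b (j - i).+1 =
  Sigma n i b (j - i) + Sigma_star j b (j - i).
Proof.
move=> ij_rng; set c := (j - i)%N.
have Sigma_c : Sigma n i b c = partial b c i + Sigma n i b c.+1.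
  by rewrite /Sigma big_ltn //; lia.
have Sigma_star_c1 : Sigma_star j b c.+1 = Sigma_star j b c + partial b c i.
  by rewrite /Sigma_star big_nat_recr //= subSS (_ : j - c = i)%N //; lia.
by rewrite Sigma_c Sigma_star_c1; lia.
Qed.

Definition fstar_incr (n j M : nat) : arr := fun s t =>
  \sum_(1 <= t0 < M.+1) (evec n t0 (j.+1 - t0) s t - evec n t0.-1 (j.+1 - t0) s t).

Lemma f_tilde_starE n j b :
  f_tilde_star n j b = addarr b (fstar_incr n j (m_star j b)).
Proof. by []. Qed.

Lemma fstar_incrS n j M s t : fstar_incr n j M.+1 s t =
  fstar_incr n j M s t + evec n M.+1 (j - M) s t - evec n M (j - M) s t.
Proof. by rewrite /fstar_incr big_nat_recr //= addrA. Qed.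

Lemma fstar_incrE n j M s t : (M <= j <= n)%N ->
  fstar_incr n j M s t =
  ind [&& 1 <= s <= M & s + t == j.+1]%N - ind [&& 1 <= s < M & s + t == j]%N.
Proof.
elim: M => [|M IH] hM; first by rewrite /fstar_incr big_geq //; lia.
by rewrite fstar_incrS IH ?evecE /inI; lia.
Qed.

Definition cross_effect (i j m k : nat) : int :=
  ind ((k == m) && (k + i == j.+1))%N - ind ((k == m) && (k + i == j))%N.

Ltac decide_nat_eqs :=
  repeat match goal with
  | |- context [?x == ?y] =>
      first [ have -> : (x == y) = true by lia | have -> : (x == y) = false by lia ]
  end.

Lemma partial_fstar_incr n i j M s : (1 <= i)%N -> (M <= j <= n)%N -> (1 <= s)%N ->
  partial (fstar_incr n j M) s i = cross_effect i j M s - cross_effect i j M s.+1.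
Proof.
move=> i_ge1 M_rng s_ge1; rewrite /partial !fstar_incrE // /cross_effect.
(* The cells of [partial _ s i] lie on the antidiagonals s + i and s + i + 1. *)
have [a_eq|[a_eq|[a_eq|a_far]]] : (s + i = j.+1 \/ s + i = j \/ (s + i).+1 = j \/
  (s + i).+1 < j \/ j.+1 < s + i)%N by lia.
all: by decide_nat_eqs; rewrite /= ?andbF ?andbT; lia.
Qed.

Lemma Sigma_fstar_incr n i j M k : (1 <= i <= n)%N -> (M <= j <= n)%N ->
  (1 <= k <= (n.+1 - i).+1)%N -> Sigma n i (fstar_incr n j M) k = cross_effect i j M k.
Proof.
move=> i_rng M_rng k_rng; rewrite /Sigma.
rewrite (telescope_sumr_eq (fun s => - cross_effect i j M s)) => [||s s_rng].
- by rewrite /cross_effect; lia.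
- by case/andP: k_rng.
- by rewrite partial_fstar_incr //; lia.
Qed.

Lemma Sigma_star_evec n i j A k : (1 <= i)%N -> (1 <= A)%N -> (A + i <= n.+1)%N ->
  (k <= j)%N -> Sigma_star j (evec n A i) k = cross_effect i j A k.
Proof.
move=> i_ge1 A_ge1 A_le le_k_j; have inI_Ai : inI n A i by rewrite /inI; lia.
rewrite Sigma_star_telescope // !evecE inI_Ai !andbT /cross_effect.
by have [->|k_neq_A] := eqVneq k A; rewrite /= ?andbF; lia.
Qed.

Lemma m_i_range n i b : (i <= n)%N -> (1 <= m_i n i b <= n.+1 - i)%N.
Proof.
by move=> le_i_n; have [|] := first_argmaxP (Sigma n i b) (_ : 1 <= n.+1 - i)%N; first lia.
Qed.

Lemma m_star_range j b : (1 <= j)%N -> (1 <= m_star j b <= j)%N.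
Proof. by move=> j_ge1; have [] := first_argmaxP (Sigma_star j b) j_ge1. Qed.

Section CommutingMoves.
Variables (n i j : nat) (b : arr).
Hypotheses (i_rng : (1 <= i <= n)%N) (j_rng : (1 <= j <= n)%N) (i_neq_j : i != j).

Lemma m_i_add_fstar_incr :
  m_i n i (addarr b (fstar_incr n j (m_star j b))) =
  if (m_star j b == j - i)%N && (m_i n i b == j - i)%N then (j - i).+1%N else m_i n i b.
Proof.
have M_rng : (1 <= m_star j b <= j)%N by apply: m_star_range; lia.
have Sigma_incr x : (1 <= x <= n.+1 - i)%N ->
    Sigma n i (addarr b (fstar_incr n j (m_star j b))) x =
    Sigma n i b x + cross_effect i j (m_star j b) x.
  by move=> x_rng; rewrite Sigma_addarr Sigma_fstar_incr //; lia.
rewrite /m_i; have /orP[lt_ij|lt_ji] : ((i < j) || (j < i))%N by rewrite -neq_ltn.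
- rewrite /m_star; apply: first_argmax_exchange; [lia|lia|lia| |].
  + by apply: Sigma_Sigma_star_step; lia.
  + by move=> x x_rng; rewrite -/(m_star j b) Sigma_incr // /cross_effect; lia.
- rewrite (_ : j - i = 0)%N; last lia.
  rewrite (_ : (m_star j b == 0%N) = false) /=; last lia.
  by apply: eq_first_argmax => x x_rng; rewrite Sigma_incr // /cross_effect; lia.
Qed.

Lemma m_star_add_evec :
  m_star j (addarr b (evec n (m_i n i b) i)) =
  if (m_star j b == j - i)%N && (m_i n i b == j - i)%N then (j - i).+1%N else m_star j b.
Proof.
have A_rng : (1 <= m_i n i b <= n.+1 - i)%N by apply: m_i_range; lia.
have Sigma_star_incr x : (1 <= x <= j)%N ->
    Sigma_star j (addarr b (evec n (m_i n i b) i)) x =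
    Sigma_star j b x + cross_effect i j (m_i n i b) x.
  by move=> x_rng; rewrite Sigma_star_addarr Sigma_star_evec //; lia.
rewrite /m_star; have /orP[lt_ij|lt_ji] : ((i < j) || (j < i))%N by rewrite -neq_ltn.
- rewrite andbC /m_i; apply: first_argmax_exchange; [lia|lia|lia| |].
  + by rewrite addrC [RHS]addrC; apply: Sigma_Sigma_star_step; lia.
  + by move=> x x_rng; rewrite -/(m_i n i b) Sigma_star_incr // /cross_effect; lia.
- rewrite (_ : j - i = 0)%N; last lia.
  rewrite (_ : (m_i n i b == 0%N) = false) ?andbF /=; last lia.
  by apply: eq_first_argmax => x x_rng; rewrite Sigma_star_incr // /cross_effect; lia.
Qed.

End CommutingMoves.

Theorem proposition6p11 (n i j : nat) (b : nat -> nat -> int) :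
  (1 <= i <= n)%N -> (1 <= j <= n)%N -> i != j -> inBinf n b ->
  f_tilde n i (f_tilde_star n j b) = f_tilde_star n j (f_tilde n i b).
Proof.
move=> i_rng j_rng i_neq_j _.
rewrite !f_tilde_starE /f_tilde m_i_add_fstar_incr // m_star_add_evec //.
case: ifP => [/andP[/eqP M_eq /eqP A_eq]|_]; last first.
  by apply: arr_ext => s t; rewrite /addarr; lia.
have M_rng : (1 <= m_star j b <= j)%N by apply: m_star_range; lia.
apply: arr_ext => s t; rewrite /addarr M_eq A_eq fstar_incrS (_ : j - (j - i) = i)%N; lia.
Qed.
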